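(* Fix a prompt $\mathbf{x}$, a finite set $\mathcal{Y}$ of responses, a reference policy $\pi_{\mathrm{ref}}(\cdot\mid\mathbf{x})$ with $\pi_{\mathrm{ref}}(\mathbf{y}\mid\mathbf{x})>0$ for all $\mathbf{y}\in\mathcal{Y}$, a reward function $r(\mathbf{x},\mathbf{y})\in\mathbb{R}$, a coefficient $\beta>0$, and a differentiably parameterized family of policies $\pi_\theta(\cdot\mid\mathbf{x})$ with $\pi_\theta(\mathbf{y}\mid\mathbf{x})>0$ for all $\mathbf{y}$. Define $$w(\mathbf{x},\mathbf{y})=\frac{\exp(r(\mathbf{x},\mathbf{y})/\beta)}{\sum_{\mathbf{y}'}\pi_{\mathrm{ref}}(\mathbf{y}'\mid\mathbf{x})\exp(r(\mathbf{x},\mathbf{y}')/\beta)},\qquad \hat w(\mathbf{x},\mathbf{y})=\frac{\pi_\theta(\mathbf{y}\mid\mathbf{x})/\pi_{\mathrm{ref}}(\mathbf{y}\mid\mathbf{x})}{\sum_{\mathbf{y}'}\pi_{\mathrm{ref}}(\mathbf{y}'\mid\mathbf{x})\,\big(\pi_\theta(\mathbf{y}'\mid\mathbf{x})/\pi_{\mathrm{ref}}(\mathbf{y}'\mid\mathbf{x})\big)},$$ and let $$\mathcal{L}_1(\theta)=-\mathbb{E}_{\mathbf{y}\sim\pi_{\mathrm{ref}}(\cdot\mid\mathbf{x})}\big[w(\mathbf{x},\mathbf{y})\log \hat w(\mathbf{x},\mathbf{y})\big]$$ (the first term of the Cal-DPO population loss) and $$\mathcal{L}_{\mathrm{MLE}}(\theta)=-\mathbb{E}_{\mathbf{y}\sim\pi_{\mathrm{ref}}(\cdot\mid\mathbf{x})}\big[w(\mathbf{x},\mathbf{y})\log\pi_\theta(\mathbf{y}\mid\mathbf{x})\big].$$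 Then minimizing $\mathcal{L}_1$ over $\theta$ is equivalent to minimizing $\mathcal{L}_{\mathrm{MLE}}$, i.e. to minimizing the forward KL divergence $\mathbb{D}_{\mathrm{KL}}[\pi^*(\cdot\mid\mathbf{x})\,\|\,\pi_\theta(\cdot\mid\mathbf{x})]$ (the two objectives differ by a quantity not depending on $\theta$), and the negative gradient of $\mathcal{L}_1$ has the contrastive form $$-\nabla_\theta\mathcal{L}_1(\theta)=\mathbb{E}_{\mathbf{y}\sim\pi_{\mathrm{ref}}(\cdot\mid\mathbf{x})}\Big[\big(w(\mathbf{x},\mathbf{y})-\hat w(\mathbf{x},\mathbf{y})\big)\nabla_\theta\log\pi_\theta(\mathbf{y}\mid\mathbf{x})\Big].$$
   Context: Here $\pi^*(\mathbf{y}\mid\mathbf{x})=\pi_{\mathrm{ref}}(\mathbf{y}\mid\mathbf{x})\exp(r(\mathbf{x},\mathbf{y})/\beta)/Z(\mathbf{x})$ with $Z(\mathbf{x})=\sum_{\mathbf{y}}\pi_{\mathrm{ref}}(\mathbf{y}\mid\mathbf{x})\exp(r(\mathbf{x},\mathbf{y})/\beta)$ is the optimal KL-regularized policy, so that $w(\mathbf{x},\mathbf{y})=\pi^*(\mathbf{y}\mid\mathbf{x})/\pi_{\mathrm{ref}}(\mathbf{y}\mid\mathbf{x})$. Expectations over $\pi_{\mathrm{ref}}$ are finite sums $\sum_{\mathbf{y}\in\mathcal{Y}}\pi_{\mathrm{ref}}(\mathbf{y}\mid\mathbf{x})(\cdot)$. *)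

(* The prompt x is fixed throughout and therefore
   left implicit: every quantity below is "at the fixed prompt x". *)
From HB Require Import structures.
From mathcomp Require Import all_boot all_order all_algebra.
From mathcomp Require Import all_classical all_reals all_analysis.
Set Implicit Arguments. Unset Strict Implicit. Unset Printing Implicit Defensive.
Import Order.TTheory GRing.Theory Num.Theory.
Import numFieldNormedType.Exports.
Local Open Scope ring_scope.

Section CalDPO.
Variables (R : realType) (Y : finType) (d : nat).

Definition Zpart (pref r : Y -> R) (beta : R) : R :=
  \sum_(y : Y) pref y * expR (r y / beta).

Definition wgt (pref r : Y -> R) (beta : R) (y : Y) : R :=
  expR (r y / beta) / Zpart pref r beta.

(* optimal KL-regularized policy pi^* *)
Definition pistar (pref r : Y -> R) (beta : R) (y : Y) : R :=
  pref y * expR (r y / beta) / Zpart pref r beta.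

Definition what (pref : Y -> R) (pi : 'rV[R]_d -> Y -> R)
    (th : 'rV[R]_d) (y : Y) : R :=
  (pi th y / pref y) / \sum_(y' : Y) pref y' * (pi th y' / pref y').

Definition L1 (pref r : Y -> R) (beta : R) (pi : 'rV[R]_d -> Y -> R)
    (th : 'rV[R]_d) : R :=
  - \sum_(y : Y) pref y * (wgt pref r beta y * ln (what pref pi th y)).

Definition LMLE (pref r : Y -> R) (beta : R) (pi : 'rV[R]_d -> Y -> R)
    (th : 'rV[R]_d) : R :=
  - \sum_(y : Y) pref y * (wgt pref r beta y * ln (pi th y)).

Definition KL (p q : Y -> R) : R :=
  \sum_(y : Y) p y * ln (p y / q y).

Definition grad (f : 'rV[R]_d -> R) (th : 'rV[R]_d) : 'rV[R]_d :=
  \row_(i < d) ('D_(delta_mx 0 i) f th).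

End CalDPO.

From HB Require Import structures.
From mathcomp Require Import all_boot all_order all_algebra.
From mathcomp Require Import all_classical all_reals all_analysis.
From mathcomp Require Import ring.
Import Order.TTheory GRing.Theory Num.Theory.
Import numFieldNormedType.Exports.
Set Implicit Arguments. Unset Strict Implicit. Unset Printing Implicit Defensive.
Local Open Scope ring_scope.

(* Both losses are cross entropies against pi^* = pi_ref w: L_MLE against
   pi_theta, and L_1 against hat w = pi_theta / pi_ref, whose normalizer is 1
   because pi_theta is a distribution.  As ln (pi_theta / pi_ref) =
   ln pi_theta - ln pi_ref, L_1 - L_MLE does not depend on theta, and a cross
   entropy exceeds the forward KL divergence by the entropy of pi^*.  For the
   gradient, the score of a normalized family has mean zero,
   sum_y pi_theta(y) grad ln pi_theta(y) = grad sum_y pi_theta(y) = 0, and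
   subtracting it from sum_y pi^*(y) grad ln pi_theta(y) gives the
   contrastive form. *)

Section Derivatives.
Variables (R : realType) (V : normedModType R).

Lemma is_derive_big (I : Type) (s : seq I) (F : I -> V -> R) x v :
  (forall i, derivable (F i) x v) ->
  is_derive x v (fun t => \sum_(i <- s) F i t) (\sum_(i <- s) 'D_v (F i) x).
Proof.
move=> dF; elim: s => [|i s IH].
  under [fun t => _]funext do rewrite big_nil.
  by rewrite big_nil; exact: is_derive_cst.
have -> : (fun t => \sum_(j <- i :: s) F j t) = F i + (fun t => \sum_(j <- s) F j t).
  by apply/funext => t; rewrite big_cons.
by rewrite big_cons; exact: is_deriveD (derivableP (dF i)) IH.
Qed.

Lemma is_derive_ln (g : V -> R) x v :
  differentiable g x -> 0 < g x ->
  is_derive x v (fun t => ln (g t)) ((g x)^-1 * 'D_v g x).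
Proof.
move=> dg gx0.
have dln : differentiable (@ln R) (g x).
  by apply/derivable1_diffP; apply: ex_derive; exact: is_derive1_ln.
have dlng : differentiable (@ln R \o g) x by exact: differentiable_comp.
apply: DeriveDef; first exact: diff_derivable.
rewrite (deriveE v dlng) diff_comp // (deriveE v dg) /= diff1E //.
by rewrite derive1E; have [_ ->] := is_derive1_ln gx0; rewrite mulrC.
Qed.

End Derivatives.

Section CrossEntropy.
Variables (R : realType) (Y : finType).

Definition cross_entropy (p q : Y -> R) : R := - \sum_(y : Y) p y * ln (q y).

Lemma cross_entropy_div (p q u : Y -> R) :
  (forall y, 0 < q y) -> (forall y, 0 < u y) ->
  cross_entropy p (fun y => q y / u y) = cross_entropy p q - cross_entropy p u.
Proof.
move=> q0 u0; rewrite /cross_entropy opprK addrC -sumrB -sumrN.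
by apply: eq_bigr => y _; rewrite ln_div ?posrE //; ring.
Qed.

Lemma KL_cross_entropy (p q : Y -> R) :
  (forall y, 0 < p y) -> (forall y, 0 < q y) ->
  KL p q = cross_entropy p q - cross_entropy p p.
Proof.
move=> p0 q0; rewrite /KL /cross_entropy opprK addrC -sumrB.
by apply: eq_bigr => y _; rewrite ln_div ?posrE //; ring.
Qed.

Variables (V : normedModType R) (p : V -> Y -> R).
Hypothesis p_normalized : forall t, \sum_(y : Y) p t y = 1.

Section AtPoint.
Variable x : V.
Hypotheses (p_gt0 : forall y, 0 < p x y)
           (p_diff : forall y, differentiable (p^~ y) x).

Lemma sum_derive_ln_eq0 v :
  \sum_(y : Y) p x y * 'D_v (fun t => ln (p t y)) x = 0.
Proof.
have -> : \sum_(y : Y) p x y * 'D_v (fun t => ln (p t y)) x =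
          \sum_(y : Y) 'D_v (p^~ y) x.
  apply: eq_bigr => y _; have [_ ->] := is_derive_ln v (p_diff y) (p_gt0 y).
  by rewrite mulrA mulfV ?mul1r // gt_eqF.
have [_ <-] := is_derive_big (index_enum Y) (fun y => diff_derivable (v := v) (p_diff y)).
under [fun t => _]funext do rewrite p_normalized.
exact: derive_cst.
Qed.

Lemma is_derive_cross_entropy (s : Y -> R) v :
  is_derive x v (fun t => cross_entropy s (p t))
    (\sum_(y : Y) (p x y - s y) * 'D_v (fun t => ln (p t y)) x).
Proof.
have dln y : derivable (fun t => ln (p t y)) x v.
  by have [] := is_derive_ln v (p_diff y) (p_gt0 y).
have -> : (fun t => cross_entropy s (p t)) =
    - (fun t => \sum_(y <- index_enum Y) (s y \*: (fun t => ln (p t y))) t).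
  by apply/funext => t; rewrite /cross_entropy.
apply: is_derive_eq; first exact: is_deriveN
  (is_derive_big _ (fun y => derivableZ (k := s y) (dln y))).
rewrite -[RHS]subr0 -[X in _ = _ - X](sum_derive_ln_eq0 v) -sumrB -sumrN.
by apply: eq_bigr => y _; rewrite deriveZ // /GRing.scale /=; ring.
Qed.

End AtPoint.
End CrossEntropy.

Lemma minimizer_addr_cst (T : Type) (R : numDomainType) (f g : T -> R) (C : R) :
  (forall t, f t = g t + C) ->
  forall t0, (forall t, f t0 <= f t) <-> (forall t, g t0 <= g t).
Proof. by move=> fE t0; split=> min t; have := min t; rewrite !fE lerD2r. Qed.

Section CalDPOLosses.
Variables (R : realType) (Y : finType) (d : nat).
Variables (pref r : Y -> R) (beta : R) (pi : 'rV[R]_d -> Y -> R).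
Hypotheses (pref_gt0 : forall y, 0 < pref y) (pi_gt0 : forall th y, 0 < pi th y)
           (pi_normalized : forall th, \sum_(y : Y) pi th y = 1).

Let pis := pistar pref r beta.

Lemma pistar_gt0 y : 0 < pis y.
Proof.
have Z0 : 0 < Zpart pref r beta.
  rewrite /Zpart (bigD1 y) //= ltr_pwDl ?mulr_gt0 ?expR_gt0 //.
  by apply: sumr_ge0 => i _; rewrite mulr_ge0 ?expR_ge0 ?ltW.
by rewrite /pis /pistar divr_gt0 ?mulr_gt0 ?expR_gt0.
Qed.

Lemma cross_entropy_pistar (q : Y -> R) :
  - \sum_(y : Y) pref y * (wgt pref r beta y * ln (q y)) = cross_entropy pis q.
Proof.
rewrite /cross_entropy /pis /pistar /wgt; congr (- _).
by apply: eq_bigr => y _; rewrite !mulrA.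
Qed.

Lemma what_normalized th y : what pref pi th y = pi th y / pref y.
Proof.
rewrite /what (eq_bigr (pi th)) ?pi_normalized ?divr1 // => y' _.
by rewrite mulrCA divff ?mulr1 ?gt_eqF.
Qed.

Lemma pref_mul_wgt_sub_what th y :
  pref y * (wgt pref r beta y - what pref pi th y) = pis y - pi th y.
Proof.
rewrite what_normalized mulrBr [pref y * (pi th y / _)]mulrCA divff ?gt_eqF // mulr1.
by rewrite /pis /pistar /wgt mulrA.
Qed.

Lemma L1_LMLE th :
  L1 pref r beta pi th = LMLE pref r beta pi th - cross_entropy pis pref.
Proof.
rewrite /L1 /LMLE !cross_entropy_pistar.
have -> : what pref pi th = fun y => pi th y / pref y.
  by apply/funext => y; exact: what_normalized.
exact: cross_entropy_div.
Qed.

Lemma LMLE_KL th :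
  LMLE pref r beta pi th = KL pis (pi th) + cross_entropy pis pis.
Proof.
by rewrite /LMLE cross_entropy_pistar KL_cross_entropy ?subrK //; exact: pistar_gt0.
Qed.

End CalDPOLosses.

Theorem theorem1 (R : realType) (Y : finType) (d : nat)
  (pref r : Y -> R) (beta : R) (pi : 'rV[R]_d -> Y -> R) :
  (forall y, 0 < pref y) ->
  \sum_(y : Y) pref y = 1 ->
  0 < beta ->
  (forall th y, 0 < pi th y) ->
  (forall th, \sum_(y : Y) pi th y = 1) ->
  (forall y th, differentiable (fun t => pi t y) th) ->
  [/\ (exists C : R, forall th, L1 pref r beta pi th = LMLE pref r beta pi th + C),
      (exists C : R, forall th,
          LMLE pref r beta pi th = KL (pistar pref r beta) (pi th) + C),
      (forall th0, (forall th, L1 pref r beta pi th0 <= L1 pref r beta pi th) <->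
                   (forall th, KL (pistar pref r beta) (pi th0)
                               <= KL (pistar pref r beta) (pi th)))
    & (forall th,
        - grad (L1 pref r beta pi) th =
        \sum_(y : Y) pref y *: ((wgt pref r beta y - what pref pi th y)
                                *: grad (fun t => ln (pi t y)) th))].
Proof.
move=> pref0 _ _ pi0 pi1 dpi.
set pis := pistar pref r beta.
have L1E := L1_LMLE r beta pref0 pi0 pi1.
have LMLEE := LMLE_KL r beta pref0 pi0.
split; [by exists (- cross_entropy pis pref) | by exists (cross_entropy pis pis) |..].
  move=> th0.
  exact: iff_trans (minimizer_addr_cst L1E th0) (minimizer_addr_cst LMLEE th0).
move=> th; apply/rowP => i; rewrite !mxE summxE.
have -> : L1 pref r beta pi =
    (fun t => cross_entropy pis (pi t)) - cst (cross_entropy pis pref).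
  by apply/funext => t; rewrite L1E /LMLE cross_entropy_pistar.
have [_ ->] := is_deriveB (is_derive_cross_entropy pi1 (pi0 th) (dpi ^~ th) pis _)
  (is_derive_cst (cross_entropy pis pref) th (delta_mx 0 i)).
rewrite subr0 -sumrN; apply: eq_bigr => y _.
rewrite !mxE /GRing.scale /= mulrA pref_mul_wgt_sub_what //.
by rewrite -mulNr opprB.
Qed.
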